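(* Let $r_{n,m}$ be the number of horizontally decorated paths ending at $(n,m)$. Then \[ r_{n,m}=r_{n,m-1}+(m+1)\,r_{n-1,m}\quad (n,m\ge1,\ n\ge m),\qquad r_{n,m}=0\quad(n<m),\qquad r_{n,0}=1\quad(n\ge0). \] Moreover, the number of relaxed binary trees of size $n$ equals $r_{n,n}$.
   Context: A horizontally decorated path is a lattice path starting at $(0,0)$ with steps $H=(1,0)$ and $V=(0,1)$ confined to the region $0\le y\le x$, in which each $H$ step is decorated by a number in $\{1,\dots,k+1\}$, where $k$ is the $y$-coordinate of that step. A (rooted, plane) binary tree is either a leaf or an internal node with an ordered pair of binary subtrees; its size is its number of internal nodes; postorder visits left subtree, right subtree, then root. A relaxed binary tree of size $n$ is obtained from a binary tree $T$ with $n$ internal nodes (its spine) by keeping the left-most leaf and turning every other leaf $\ell$ into a pointer to a vertex of $T$ which is an internal node or the left-most leaf and which precedes $\ell$ in postorder; two relaxed trees are equal iff they have the same spine and the same pointer targets. *)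

From mathcomp Require Import all_boot.
From Stdlib Require List.

Set Implicit Arguments.
Unset Strict Implicit.
Unset Printing Implicit Defensive.

Definition is_count (T : Type) (P : T -> Prop) (k : nat) : Prop :=
  exists s : list T, List.NoDup s /\ (forall x, List.In x s <-> P x) /\
                     List.length s = k.

(** A path is a sequence of steps: [None] is a V step (0,1), [Some d] is an
    H step (1,0) decorated by the number [d]. *)
Definition step := option nat.

Definition xcoord (s : seq step) (i : nat) : nat :=
  count (fun st : step => if st is Some _ then true else false) (take i s).
Definition ycoord (s : seq step) (i : nat) : nat :=
  count (fun st : step => if st is None then true else false) (take i s).

Definition hd_path (n m : nat) (s : seq step) : Prop :=
  (* confined to the region 0 <= y <= x (y >= 0 automatic) *)
  (forall i, i <= size s -> ycoord s i <= xcoord s i) /\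
  (forall i d, i < size s -> nth None s i = Some d ->
               1 <= d /\ d <= (ycoord s i).+1) /\
  xcoord s (size s) = n /\ ycoord s (size s) = m.

Inductive bt : Type :=
| Leaf : bt
| Node : bt -> bt -> bt.

Fixpoint bt_size (t : bt) : nat :=
  match t with Leaf => 0 | Node l r => (bt_size l + bt_size r).+1 end.

(** The vertices of a tree in postorder (left subtree, right subtree, root);
    [true] marks an internal node, [false] a leaf.  A vertex is identified
    with its position in this list. *)
Fixpoint postorder (t : bt) : seq bool :=
  match t with
  | Leaf => [:: false]
  | Node l r => postorder l ++ postorder r ++ [:: true]
  end.

Fixpoint leftmost_pos (t : bt) : nat :=
  match t with Leaf => 0 | Node l _ => leftmost_pos l end.

Definition pointer_leaves (t : bt) : seq nat :=
  [seq p <- iota 0 (size (postorder t)) |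
     (~~ nth true (postorder t) p) && (p != leftmost_pos t)].

(** A relaxed binary tree is a spine [t] together with, for each leaf other
    than the left-most one (listed in postorder), the postorder position of
    its pointer target; the target must be an internal node or the left-most
    leaf and precede the leaf in postorder. *)
Definition relaxed_tree (n : nat) (rt : bt * seq nat) : Prop :=
  let (t, ptr) := rt in
  bt_size t = n /\
  size ptr = size (pointer_leaves t) /\
  (forall i, i < size ptr ->
     let l := nth 0 (pointer_leaves t) i in
     let q := nth 0 ptr i in
     q < l /\ (nth false (postorder t) q || (q == leftmost_pos t))).

From mathcomp Require Import all_boot zify.
From Stdlib Require List.

Set Implicit Arguments.
Unset Strict Implicit.
Unset Printing Implicit Defensive.

(* The counting sequence is read off an enumeration of the paths by their last
   step.  For the bijection, write a path to (n, n) as a word with [true] for a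
   V step and [false] for an H step: prefixed by [false] for the left-most leaf,
   it is the postorder word of a spine with n internal nodes, the constraint
   y <= x being exactly what makes its stack decoding succeed.  The H
   steps are then the other leaves in postorder, and a leaf whose H step lies at
   height k is preceded by k + 1 admissible pointer targets, the left-most leaf
   and k internal nodes; its decoration d in {1, ..., k + 1} selects the d-th. *)

Lemma is_count_uniq (T : eqType) (P : T -> Prop) (s : seq T) :
  uniq s -> (forall x, x \in s <-> P x) -> is_count P (size s).
Proof.
have In_mem (x : T) s' : List.In x s' <-> x \in s'.
  elim: s' => [|y s' IH] //=; rewrite inE IH eq_sym.
  by split=> [[->|->] | /orP[/eqP->|->]]; rewrite ?eqxx ?orbT; auto.
move=> uniq_s memP; exists s; split; last by split=> // x; rewrite In_mem memP.
elim: s uniq_s {memP} => [|x s IH] /=; first by constructor.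
by case/andP=> /negP x_notin_s /IH; constructor; rewrite // In_mem.
Qed.

Lemma is_count_bij (T U : Type) (P : T -> Prop) (Q : U -> Prop)
    (f : T -> U) (g : U -> T) k :
  (forall x, P x -> Q (f x)) -> (forall y, Q y -> P (g y)) ->
  (forall x, P x -> g (f x) = x) -> (forall y, Q y -> f (g y) = y) ->
  is_count P k -> is_count Q k.
Proof.
move=> PQ QP fK gK [s [nodup_s [memP <-]]]; exists (map f s); split.
  apply: List.NoDup_map_NoDup_ForallPairs nodup_s => x x' /memP Px /memP Px' e.
  by rewrite -(fK x Px) e fK.
split; last exact: List.length_map.
move=> y; rewrite List.in_map_iff; split=> [[x [<- /memP /PQ]] // | Qy].
by exists (g y); split; [apply: gK | apply/memP/QP].
Qed.

Section Positions.
Variables (T : Type) (P : pred T).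
Implicit Type s : seq T.

Lemma leq_count_take s i j : i <= j -> count P (take i s) <= count P (take j s).
Proof. by move=> le_ij; rewrite -(subnKC le_ij) takeD count_cat leq_addr. Qed.

Lemma count_take_leq s i : count P (take i s) <= count P s.
Proof. by rewrite -{2}(cat_take_drop i s) count_cat leq_addr. Qed.

Lemma ltn_count_take (x0 : T) s j l : j < size s -> P (nth x0 s j) ->
  (count P (take j s) < count P (take l s)) = (j < l).
Proof.
move=> lt_js Pj; case: (ltnP j l) => [lt_jl | le_lj]; last first.
  by apply/negbTE; rewrite -leqNgt leq_count_take.
apply: leq_trans (leq_count_take s lt_jl).
by rewrite (take_nth x0 lt_js) -cats1 count_cat /= Pj addn1.
Qed.

Lemma count_take_ltn (x0 : T) s j : j < size s -> P (nth x0 s j) ->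
  count P (take j s) < count P s.
Proof. by move=> lt_js Pj; rewrite -{2}(take_size s) (ltn_count_take _ lt_js Pj). Qed.

Lemma forall_ltn_count (x0 : T) (Q : nat -> Prop) s :
  (forall i, i < count P s -> Q i) <->
  (forall j, j < size s -> P (nth x0 s j) -> Q (count P (take j s))).
Proof.
split=> [HQ j lt_js Pj | ]; first exact/HQ/(count_take_ltn lt_js Pj).
elim: s Q => [|x s IH] Q //= HQ.
have HQs j : j < size s -> P (nth x0 s j) -> Q (P x + count P (take j s)).
  exact: (HQ j.+1).
case: (P x) (HQ 0) HQs => /= HQ0 HQs; last by move=> i; apply: IH.
case=> [|i] lt_is; first exact: HQ0.
exact: (IH (fun i => Q i.+1)).
Qed.

Fixpoint positions s : seq nat :=
  if s is x :: s' then
    if P x then 0 :: map S (positions s') else map S (positions s')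
  else [::].

Lemma positionsE (x0 : T) s : positions s = [seq j <- iota 0 (size s) | P (nth x0 s j)].
Proof.
elim: s => //= x s ->; rewrite -(addn0 1) iotaDl filter_map /=.
by case: (P x).
Qed.

Lemma size_positions s : size (positions s) = count P s.
Proof. by elim: s => //= x s IH; case: (P x); rewrite /= size_map IH. Qed.

Lemma mem_positions (x0 : T) s j : (j \in positions s) = (j < size s) && P (nth x0 s j).
Proof. by rewrite (positionsE x0) mem_filter mem_iota andbC. Qed.

Lemma uniq_positions s : uniq (positions s).
Proof. by case: s => // x0 s; rewrite (positionsE x0) filter_uniq ?iota_uniq. Qed.

Lemma nth_positions (x0 : T) s j : j < size s -> P (nth x0 s j) ->
  nth 0 (positions s) (count P (take j s)) = j.
Proof.
elim: s j => //= x s IH [|j] /=; first by move=> _ ->.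
move=> lt_js Pj; have lt_count := count_take_ltn lt_js Pj.
by case: (P x); rewrite /= (nth_map 0) ?size_positions ?IH.
Qed.

Lemma index_positions s j : j \in positions s ->
  index j (positions s) = count P (take j s).
Proof.
case: s => [|x0 s] // js; move: (js); rewrite (mem_positions x0) => /andP[lt_js Pj].
rewrite -{1}(nth_positions lt_js Pj) index_uniq ?uniq_positions //.
by rewrite size_positions (count_take_ltn lt_js Pj).
Qed.

Lemma index_positions_ltn s j l :
  (index j (positions s) < count P (take l s)) = (j \in positions s) && (j < l).
Proof.
have [js | jNs] := boolP (j \in positions s); last first.
  by rewrite (memNindex jNs) size_positions ltnNge count_take_leq.
rewrite index_positions //; case: s js => [|x0 s] // js.
move: js; rewrite (mem_positions x0) => /andP[lt_js Pj].
by rewrite (ltn_count_take _ lt_js Pj).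
Qed.

End Positions.

Lemma forall_take_rcons (T : Type) (P : seq T -> Prop) q x :
  (forall i, P (take i (rcons q x))) <-> (forall i, P (take i q)) /\ P (rcons q x).
Proof.
split=> [H | [Hq Hx] i].
  split=> [i|]; last by have := H (size q).+1; rewrite take_oversize ?size_rcons.
  case: (leqP i (size q)) => [le_iq | lt_qi].
    by have := H i; rewrite -cats1 takel_cat.
  by have := H (size q); rewrite -cats1 take_size_cat // take_oversize // ltnW.
case: (leqP i (size q)) => [le_iq | lt_qi]; first by rewrite -cats1 takel_cat.
by rewrite take_oversize // size_rcons.
Qed.

Lemma forall_nth_rcons (T : Type) (x0 : T) (R : seq T -> T -> Prop) q x :
  (forall s, R s x0) ->
  (forall i, R (take i (rcons q x)) (nth x0 (rcons q x) i)) <->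
  (forall i, R (take i q) (nth x0 q i)) /\ R q x.
Proof.
move=> R0; split=> [H | [Hq Hx] i].
  split=> [i|]; last first.
    by have := H (size q); rewrite nth_rcons ltnn eqxx -cats1 take_size_cat.
  case: (ltnP i (size q)) => [lt_iq | le_qi]; last by rewrite nth_default.
  by have := H i; rewrite nth_rcons lt_iq -cats1 takel_cat // ltnW.
rewrite nth_rcons; case: ltngtP => [lt_iq | // | ->].
  by rewrite -cats1 takel_cat // ltnW.
by rewrite -cats1 take_size_cat.
Qed.

Section Extend.
Variable T : eqType.
Implicit Types (X : seq (seq T)) (D : seq T).

Definition extend X D : seq (seq T) := [seq rcons p x | p <- X, x <- D].

Lemma size_extend X D : size (extend X D) = size X * size D.
Proof. exact: size_allpairs. Qed.

Lemma nil_extend X D : ([::] \in extend X D) = false.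
Proof. by apply/allpairsP=> -[[p x] [_ _ /eqP]]; rewrite eq_sym -size_eq0 size_rcons. Qed.

Lemma mem_extend X D q x : (rcons q x \in extend X D) = (q \in X) && (x \in D).
Proof.
apply/allpairsP/andP=> [[[p x'] [pX x'D /rcons_inj[-> ->]]] // | [qX xD]].
by exists (q, x).
Qed.

Lemma uniq_extend X D : uniq X -> uniq D -> uniq (extend X D).
Proof.
by move=> uX uD; apply: allpairs_uniq => // -[p x] [p' x'] _ _ /rcons_inj[-> ->].
Qed.

End Extend.

Lemma postorder_leftmost t : postorder t = false :: behead (postorder t).
Proof. by elim: t => //= l -> r _. Qed.

Lemma leftmost_pos0 t : leftmost_pos t = 0.
Proof. by elim: t. Qed.

Lemma count_postorder_nodes t : count id (postorder t) = bt_size t.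
Proof. by elim: t => //= l IHl r IHr; rewrite !count_cat IHl IHr /=; lia. Qed.

Fixpoint parse (stk : seq bt) (w : seq bool) : option bt :=
  match w, stk with
  | [::], [:: t] => Some t
  | false :: w', _ => parse (Leaf :: stk) w'
  | true :: w', r :: l :: stk' => parse (Node l r :: stk') w'
  | _, _ => None
  end.

Lemma parse_postorder_cat t stk w : parse stk (postorder t ++ w) = parse (t :: stk) w.
Proof. by elim: t stk w => //= l IHl r IHr stk w; rewrite -!catA IHl IHr. Qed.

Lemma parse_sound stk w t : parse stk w = Some t ->
  postorder t = flatten (map postorder (rev stk)) ++ w.
Proof.
elim: w stk => [|[] w IH] stk /=.
    by case: stk => [|t0 []] //= [<-]; rewrite !cats0.
  case: stk => [|r [|l stk]] // /IH ->.
  by rewrite !rev_cons !map_rcons !flatten_rcons -!catA.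
by move/IH ->; rewrite rev_cons map_rcons flatten_rcons -catA.
Qed.

(* After reading [take i w] the stack of [parse] holds
   [k + count negb (take i w) - count id (take i w)] trees. *)
Definition parsable (k : nat) (w : seq bool) : Prop :=
  (forall i, count id (take i w) < k + count negb (take i w)) /\
  count id w + 1 = k + count negb w.

Lemma parsable_cons k b w : 0 < k ->
  parsable k (b :: w) <-> parsable (if b then k.-1 else k.+1) w.
Proof.
move=> k_gt0; split=> [[pre tot] | [pre tot]]; case: b in pre tot *.
1,2: by split=> [i|]; [have := pre i.+1 | move: tot] => /=; lia.
all: by split=> [[|i]|]; [rewrite take0 | have := pre i | move: tot] => /=; lia.
Qed.

Lemma parseP stk w : 0 < size stk ->
  (exists t, parse stk w = Some t) <-> parsable (size stk) w.
Proof.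
elim: w stk => [|b w IH] stk stk_gt0.
  rewrite /parsable; case: stk stk_gt0 => [|t [|t' stk]] //= _.
    by split=> _; [split | exists t].
  by split=> [[] | []].
rewrite parsable_cons //; case: b => /=; last exact: IH.
case: stk stk_gt0 => [|r [|l stk]] //= _; last exact: IH.
by split=> [[] | [/(_ 0)]] //; rewrite take0.
Qed.

Lemma parse_postorder t : parse [:: Leaf] (behead (postorder t)) = Some t.
Proof.
by have := parse_postorder_cat t [::] [::]; rewrite cats0 {1}postorder_leftmost.
Qed.

Definition ballot (u : seq bool) : Prop :=
  forall i, count id (take i u) <= count negb (take i u).

Lemma parsable1 u : parsable 1 u <-> ballot u /\ count id u = count negb u.
Proof.
split=> [[pre tot] | [bal tot]]; split=> [i|]; try lia.
  by have := pre i; lia.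
by have := bal i; lia.
Qed.

Definition spine (u : seq bool) : bt := odflt Leaf (parse [:: Leaf] u).

Lemma spine_postorder t : spine (behead (postorder t)) = t.
Proof. by rewrite /spine parse_postorder. Qed.

Lemma parsable_postorder t : parsable 1 (behead (postorder t)).
Proof. by apply/(parseP (stk := [:: Leaf])) => //; exists t; apply: parse_postorder. Qed.

Lemma postorder_spine u : parsable 1 u -> postorder (spine u) = false :: u.
Proof.
case/(parseP (stk := [:: Leaf])) => // t parse_t.
by rewrite /spine parse_t (parse_sound parse_t).
Qed.

Definition isH (st : step) : bool := if st is Some _ then true else false.
Definition isV (st : step) : bool := if st is None then true else false.

Lemma count_isV y : count isV y = count id (map isV y).
Proof. by rewrite count_map. Qed.

Lemma count_isH y : count isH y = count negb (map isV y).
Proof. by rewrite count_map; apply: eq_count => -[]. Qed.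

Definition well_decorated (prefix : seq step) (st : step) : bool :=
  if st is Some d then 0 < d <= (count isV prefix).+1 else true.

Lemma hd_pathE n m y : hd_path n m y <->
  [/\ forall i, count isV (take i y) <= count isH (take i y),
      forall i, well_decorated (take i y) (nth None y i),
      count isH y = n & count isV y = m].
Proof.
rewrite /hd_path /xcoord /ycoord take_size.
split=> [[conf [dec [<- <-]]] | [conf dec <- <-]]; last first.
  split=> [i _ | ]; first exact: conf.
  by split=> // i d _ y_i; have := dec i; rewrite y_i => /andP.
split=> // i.
  case: (leqP i (size y)) => [|lt_yi]; first exact: conf.
  by have := conf _ (leqnn _); rewrite take_size take_oversize // ltnW.
case y_i: (nth None y i) => [d|] //=; apply/andP/(dec i) => //.
by rewrite ltnNge; apply/negP => le_yi; rewrite nth_default in y_i.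
Qed.

Lemma hd_path_nil n m : hd_path n m [::] <-> n = 0 /\ m = 0.
Proof. by rewrite hd_pathE; split=> [[_ _ <- <-] | [-> ->]]; last split=> // -[]. Qed.

Lemma hd_path_rcons n m q st : hd_path n m (rcons q st) <->
  m <= n /\ (if st is Some d then [/\ 0 < n, 0 < d <= m.+1 & hd_path n.-1 m q]
             else 0 < m /\ hd_path n m.-1 q).
Proof.
have conf := forall_take_rcons (fun p => count isV p <= count isH p) q st.
have dec := @forall_nth_rcons _ None well_decorated q st (fun _ => isT).
rewrite hd_pathE; split=> [[/conf[conf_q conf_st] /dec[dec_q dec_st]] | [le_mn]].
  move: conf_st dec_st; rewrite -cats1 !count_cat.
  by case: st {conf dec} => [d|] /= le_VH dec_st <- <-; rewrite !addn0 ?addn1 in le_VH *;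
    split=> //; split=> //; apply/hd_pathE.
case: st conf dec => [d|] conf dec;
  [case=> n_gt0 dec_d | case=> m_gt0] => /hd_pathE[conf_q dec_q eH eV].
all: split; [apply/conf; split | apply/dec; split | |] => //.
all: rewrite /= -?cats1 ?count_cat /=; lia.
Qed.

Fixpoint hd_paths (n : nat) : nat -> seq (seq step) :=
  fix hd_paths_n m :=
    if n < m then [::] else
    (if m is m'.+1 then extend (hd_paths_n m') [:: None] else [::]) ++
    (if n is n'.+1 then extend (hd_paths n' m) [seq Some d | d <- iota 1 m.+1]
     else [:: [::]]).

Lemma hd_pathsE n m : hd_paths n m =
  if n < m then [::] else
  (if 0 < m then extend (hd_paths n m.-1) [:: None] else [::]) ++
  (if 0 < n then extend (hd_paths n.-1 m) [seq Some d | d <- iota 1 m.+1]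
   else [:: [::]]).
Proof. by case: n m => [|n] [|m]. Qed.

Lemma rcons_hd_paths n m q st : (rcons q st \in hd_paths n m) =
  (m <= n) && (if st is Some d then [&& 0 < n, 0 < d <= m.+1 & q \in hd_paths n.-1 m]
               else (0 < m) && (q \in hd_paths n m.-1)).
Proof.
have None_notin (s : seq nat) : (None \in map Some s) = false by apply/mapP=> -[].
rewrite hd_pathsE; case: ltnP => // _; rewrite mem_cat andTb.
case: ifP => m_gt0; case: ifP => n_gt0; case: st => [d|];
  rewrite ?mem_extend ?mem_seq1 -?size_eq0 ?size_rcons ?(mem_map (@Some_inj _))
          ?mem_iota ?None_notin.
all: by rewrite /= ?andbF ?andbT ?orbF // andbC.
Qed.

Lemma nil_hd_paths n m : ([::] \in hd_paths n m) = (n == 0) && (m == 0).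
Proof.
rewrite hd_pathsE; case: n m => [|n] [|m] //=; first exact: nil_extend.
by case: ifP => //; rewrite mem_cat !nil_extend.
Qed.

Lemma mem_hd_paths n m p : p \in hd_paths n m <-> hd_path n m p.
Proof.
elim/last_ind: p n m => [|q st IH] n m.
  by rewrite nil_hd_paths hd_path_nil; split=> [/andP[/eqP-> /eqP->] | [-> ->]].
rewrite rcons_hd_paths hd_path_rcons; case: st => [d|].
  by split=> [/and4P[-> -> -> /IH] | [-> [-> -> /IH ->]]].
by split=> [/and3P[-> -> /IH] | [-> [-> /IH ->]]].
Qed.

Lemma uniq_hd_paths n m : uniq (hd_paths n m).
Proof.
have uniq_decorations k : uniq [seq Some d | d <- iota 1 k].
  by rewrite (map_inj_uniq (@Some_inj _)) iota_uniq.
elim: n m => [|n IHn] m; first by rewrite hd_pathsE; case: m.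
elim: m => [|m IHm]; rewrite hd_pathsE ltn0Sn; case: ltnP => // _.
  by rewrite ltnn cat0s uniq_extend.
rewrite cat_uniq !uniq_extend ?uniq_decorations // andbT.
apply/hasPn=> y /allpairsP[[p st] [_ /mapP[d _ ->] ->]].
by rewrite mem_extend mem_seq1 andbF.
Qed.

Definition num_hd_paths n m : nat := size (hd_paths n m).

Lemma num_hd_paths_gt n m : n < m -> num_hd_paths n m = 0.
Proof. by rewrite /num_hd_paths hd_pathsE => ->. Qed.

Lemma num_hd_paths0 n : num_hd_paths n 0 = 1.
Proof.
rewrite /num_hd_paths; elim: n => [|n IH]; rewrite hd_pathsE //=.
by rewrite size_extend IH.
Qed.

Lemma num_hd_pathsS n m : 0 < n -> 0 < m -> m <= n ->
  num_hd_paths n m = num_hd_paths n m.-1 + m.+1 * num_hd_paths n.-1 m.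
Proof.
move=> n_gt0 m_gt0 le_mn; rewrite /num_hd_paths hd_pathsE ltnNge le_mn n_gt0 m_gt0.
by rewrite size_cat !size_extend size_map size_iota muln1 mulnC.
Qed.

Lemma count_hd_paths n m : is_count (hd_path n m) (num_hd_paths n m).
Proof. exact: is_count_uniq (uniq_hd_paths n m) (mem_hd_paths n m). Qed.

Lemma hd_path_decoration n m y d : hd_path n m y -> d \in pmap id y -> 0 < d <= m.+1.
Proof.
case/hd_pathE=> _ dec _ <-; rewrite mem_pmap map_id => y_d.
have := dec (index (Some d) y); rewrite nth_index //= => /andP[-> le_d].
by rewrite (leq_trans le_d) // ltnS count_take_leq.
Qed.

Lemma hd_path_parsable n y : hd_path n n y -> parsable 1 (map isV y).
Proof.
case/hd_pathE=> bal _ cH cV; apply/parsable1; split.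
  by move=> i; have := bal i; rewrite count_isV count_isH map_take.
by rewrite -count_isV -count_isH cH cV.
Qed.

Fixpoint weave (u : seq bool) (ds : seq nat) : seq step :=
  if u is b :: u' then
    if b then None :: weave u' ds else Some (head 0 ds) :: weave u' (behead ds)
  else [::].

Lemma map_isV_weave u ds : map isV (weave u ds) = u.
Proof. by elim: u ds => [|[] u IH] ds //=; rewrite IH. Qed.

Lemma pmap_weave u ds : size ds = count negb u -> pmap id (weave u ds) = ds.
Proof.
by elim: u ds => [|[] u IH] [|d ds] //= [size_ds]; rewrite ?IH.
Qed.

Lemma weave_pmap y : weave (map isV y) (pmap id y) = y.
Proof. by elim: y => [|[d|] y IH] //=; rewrite IH. Qed.

Lemma nth_weave u ds j : j < size u -> nth None (weave u ds) j =
  if nth true u j then None else Some (nth 0 ds (count negb (take j u))).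
Proof.
elim: u ds j => [|[] u IH] ds [|j] //= lt_ju; rewrite IH //.
by rewrite add1n; case: ds => [|d ds] //=; rewrite !nth_nil.
Qed.

Lemma size_pmap_id y : size (pmap id y) = count negb (map isV y).
Proof. by rewrite size_pmap -count_isH; apply: eq_count => -[]. Qed.

(* The height of the i-th H step of a path of shape [u], i.e. the number of
   internal nodes preceding the i-th pointer leaf of the spine. *)
Definition leaf_height (u : seq bool) (i : nat) : nat :=
  count id (take (nth 0 (positions negb u) i) u).

Lemma hd_path_weave n m u ds : size ds = count negb u ->
  hd_path n m (weave u ds) <->
  [/\ ballot u, count negb u = n, count id u = m &
      forall i, i < count negb u -> 0 < nth 0 ds i <= (leaf_height u i).+1].
Proof.
move=> size_ds; set y := weave u ds.
have shape_y : map isV y = u := map_isV_weave u ds.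
have ballotP : (forall i, count isV (take i y) <= count isH (take i y)) <-> ballot u.
  by split=> H i; have := H i; rewrite count_isV count_isH map_take shape_y.
have decP : (forall i, well_decorated (take i y) (nth None y i)) <->
            (forall i, i < count negb u -> 0 < nth 0 ds i <= (leaf_height u i).+1).
  rewrite (forall_ltn_count _ true); split=> dec j.
    move=> lt_ju uNj; have := dec j; rewrite nth_weave // (negbTE uNj) /=.
    by rewrite /leaf_height (nth_positions lt_ju uNj) count_isV map_take shape_y.
  case: (ltnP j (size u)) => [lt_ju | le_uj]; last first.
    by rewrite nth_default // -(size_map isV) shape_y.
  rewrite nth_weave //; case: ifPn => //= uNj; have := dec j lt_ju uNj.
  by rewrite /leaf_height (nth_positions lt_ju uNj) count_isV map_take shape_y.
rewrite hd_pathE count_isH count_isV shape_y.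
by split=> [[/ballotP ? /decP ? <- <-] | [/ballotP ? <- <- /decP ?]].
Qed.

Lemma pointer_leavesE t :
  pointer_leaves t = map S (positions negb (behead (postorder t))).
Proof.
rewrite /pointer_leaves leftmost_pos0 {1 2}[postorder t]postorder_leftmost /=.
rewrite (positionsE _ true) -[1]/(1 + 0) iotaDl filter_map.
by congr map; apply: eq_filter => i /=; rewrite andbT.
Qed.

(* Marking position 0 by [true] makes [positions] list the admissible pointer
   targets in the postorder word [false :: u]: the left-most leaf and the
   internal nodes. *)
Definition targets (u : seq bool) : seq nat := positions id (true :: u).

Lemma size_targets u : size (targets u) = (count id u).+1.
Proof. by rewrite size_positions. Qed.

Lemma mem_targets u q : (q \in targets u) = nth false (false :: u) q || (q == 0).
Proof.
rewrite (mem_positions _ false); case: q => [|q] //=; rewrite orbF.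
by case: ltnP => // le_uq; rewrite nth_default.
Qed.

Lemma relaxed_treeE n t ptr u : postorder t = false :: u ->
  relaxed_tree n (t, ptr) <->
  [/\ bt_size t = n, size ptr = count negb u &
      forall i, i < count negb u -> index (nth 0 ptr i) (targets u) <= leaf_height u i].
Proof.
move=> post_t; have u_def : u = behead (postorder t) by rewrite post_t.
rewrite /relaxed_tree pointer_leavesE -u_def post_t leftmost_pos0 size_map size_positions.
have entry i : i < count negb u ->
    (nth 0 ptr i < nth 0 (map S (positions negb u)) i /\
     nth false (false :: u) (nth 0 ptr i) || (nth 0 ptr i == 0)) <->
    index (nth 0 ptr i) (targets u) <= leaf_height u i.
  move=> lt_i; rewrite (nth_map 0) ?size_positions // -[index _ _ <= _]ltnS.
  have -> : (leaf_height u i).+1 =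
            count id (take (nth 0 (positions negb u) i).+1 (true :: u)) by [].
  rewrite index_positions_ltn -/(targets u) mem_targets andbC.
  by split=> [[-> ->] | /andP[-> ->]].
split=> [[sz [sp H]] | [sz sp H]].
  by split=> // i lt_i; apply/entry/H; rewrite ?sp.
by split=> //; split=> // i; rewrite sp => lt_i; apply/entry/H.
Qed.

Definition pointer_of (u : seq bool) (d : nat) : nat := nth 0 (targets u) d.-1.
Definition decoration_of (u : seq bool) (q : nat) : nat := (index q (targets u)).+1.

Lemma index_pointer_of u d : 0 < d <= (count id u).+1 ->
  index (pointer_of u d) (targets u) = d.-1.
Proof.
case: d => // d /andP[_ le_d].
by rewrite /pointer_of index_uniq ?uniq_positions ?size_targets.
Qed.

Lemma pointer_ofK u d : 0 < d <= (count id u).+1 ->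
  decoration_of u (pointer_of u d) = d.
Proof.
by case/andP=> d_gt0 le_d; rewrite /decoration_of index_pointer_of ?d_gt0 // prednK.
Qed.

Lemma decoration_ofK u q : q \in targets u -> pointer_of u (decoration_of u q) = q.
Proof. exact: nth_index. Qed.

Definition relaxed_of_path (y : seq step) : bt * seq nat :=
  (spine (map isV y), map (pointer_of (map isV y)) (pmap id y)).

Definition path_of_relaxed (x : bt * seq nat) : seq step :=
  let u := behead (postorder x.1) in weave u (map (decoration_of u) x.2).

Lemma relaxed_of_path_valid n y : hd_path n n y -> relaxed_tree n (relaxed_of_path y).
Proof.
move=> hp; rewrite /relaxed_of_path; set u := map isV y; set ds := pmap id y.
have post : postorder (spine u) = false :: u := postorder_spine (hd_path_parsable hp).
have size_ds : size ds = count negb u := size_pmap_id y.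
move: hp; rewrite -{1}(weave_pmap y) -/u -/ds.
case/(hd_path_weave _ _ size_ds) => _ _ nodes dec.
apply/(relaxed_treeE _ _ post); split=> [| | i lt_i].
    by rewrite -count_postorder_nodes post.
  by rewrite size_map.
have := count_take_leq id u (nth 0 (positions negb u) i); rewrite -/(leaf_height u i).
have := dec i lt_i; rewrite (nth_map 0) ?size_ds //.
by move=> dec_i le_h; rewrite index_pointer_of; lia.
Qed.

Lemma path_of_relaxed_valid n x : relaxed_tree n x -> hd_path n n (path_of_relaxed x).
Proof.
case: x => t ptr; rewrite /path_of_relaxed /=; set u := behead (postorder t).
have post : postorder t = false :: u := postorder_leftmost t.
case/(relaxed_treeE _ _ post) => sz sp bounded.
have /parsable1[bal balanced] := parsable_postorder t; rewrite -/u in bal balanced.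
have nodes : count id u = n by rewrite -sz -count_postorder_nodes post.
apply/hd_path_weave; first by rewrite size_map sp.
split=> //; first by rewrite -balanced.
by move=> i lt_i; rewrite (nth_map 0) ?sp // ltnS; apply: bounded.
Qed.

Lemma relaxed_of_pathK n y : hd_path n n y -> path_of_relaxed (relaxed_of_path y) = y.
Proof.
move=> hp; rewrite /path_of_relaxed /relaxed_of_path /=.
rewrite (postorder_spine (hd_path_parsable hp)) [behead _]/= -map_comp.
rewrite map_id_in ?weave_pmap // => d d_in /=.
case/hd_pathE: (hp) => _ _ _ nodes.
by rewrite pointer_ofK // -count_isV nodes (hd_path_decoration hp d_in).
Qed.

Lemma path_of_relaxedK n x : relaxed_tree n x -> relaxed_of_path (path_of_relaxed x) = x.
Proof.
case: x => t ptr; rewrite /path_of_relaxed /relaxed_of_path /=.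
set u := behead (postorder t).
case/(relaxed_treeE _ _ (postorder_leftmost t)) => _ sp bounded.
rewrite map_isV_weave pmap_weave ?size_map // spine_postorder -map_comp map_id_in // => q.
case/(nthP 0) => i lt_i <-; rewrite /= decoration_ofK // -index_mem size_targets.
rewrite sp in lt_i; apply: leq_ltn_trans (bounded i lt_i) _.
by rewrite ltnS count_take_leq.
Qed.

Lemma count_relaxed_trees n : is_count (relaxed_tree n) (num_hd_paths n n).
Proof.
exact: is_count_bij (@relaxed_of_path_valid n) (@path_of_relaxed_valid n)
  (@relaxed_of_pathK n) (@path_of_relaxedK n) (count_hd_paths n n).
Qed.

Theorem proposition2p6 :
  exists r : nat -> nat -> nat,
    (forall n m : nat, is_count (hd_path n m) (r n m)) /\
    (forall n m : nat, 1 <= n -> 1 <= m -> m <= n ->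
        r n m = r n (m - 1) + (m + 1) * r (n - 1) m) /\
    (forall n m : nat, n < m -> r n m = 0) /\
    (forall n : nat, r n 0 = 1) /\
    (forall n : nat, is_count (relaxed_tree n) (r n n)).
Proof.
exists num_hd_paths; split; first exact: count_hd_paths.
split; first by move=> n m *; rewrite num_hd_pathsS // !subn1 addn1.
split; first exact: num_hd_paths_gt.
split; first exact: num_hd_paths0.
exact: count_relaxed_trees.
Qed.
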